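(* Let $\sigma>0$, $\eta>0$, $\hat\alpha>0$, $h>0$, $r\ge0$, $a\in\mathbb{R}$, and for $\beta\ge0$ let $v_\beta$ denote the unique $C^1[0,\infty)$ solution of $\frac{\sigma^2}2v'(y)=\beta+\frac{\hat\alpha}4v(y)^2+\eta y(v(y)-\frac h\eta)-av(y)$, $y\ge0$, $v(0)=-r$. If $0\le\beta_1<\beta_2$, then $v_{\beta_1}(x)<v_{\beta_2}(x)$ for all $x>0$. *)

From Stdlib Require Import Reals.
From Coquelicot Require Import Coquelicot.
Open Scope R_scope.

Definition ode_rhs (eta alpha h a beta y w : R) : R :=
  beta + alpha / 4 * w ^ 2 + eta * y * (w - h / eta) - a * w.

Definition C1_on_nonneg (v v' : R -> R) : Prop :=
  (forall y, 0 < y -> is_derive v y (v' y)) /\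
  filterlim (fun t => (v t - v 0) / t) (at_right 0) (locally (v' 0)) /\
  (forall y, 0 < y -> continuous v' y) /\
  filterlim v' (at_right 0) (locally (v' 0)).

Definition is_solution (sigma eta alpha h r a beta : R) (v : R -> R) : Prop :=
  exists v' : R -> R,
    C1_on_nonneg v v' /\
    (forall y, 0 <= y -> sigma ^ 2 / 2 * v' y = ode_rhs eta alpha h a beta y (v y)) /\
    v 0 = - r.

(* Let w := v2 - v1, so w(0) = 0.  Wherever v1 and v2 agree, the ODE gives
   (sigma^2/2) w' = beta2 - beta1 > 0; in particular w'(0) > 0 and w > 0 just
   to the right of 0.  If w vanished somewhere on (0, +oo), at its first zero m
   we would again have w'(m) > 0, so w < 0 just to the left of m, contradicting
   the positivity of w on (0, m). *)

From Stdlib Require Import Reals Lra.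
From Coquelicot Require Import Coquelicot.
Open Scope R_scope.

Lemma filterlim_Rminus {T : Type} {F : (T -> Prop) -> Prop} {FF : Filter F}
    (f g : T -> R) (a b : R) :
  filterlim f F (locally a) -> filterlim g F (locally b) ->
  filterlim (fun t => f t - g t) F (locally (a - b)).
Proof.
intros Hf Hg.
apply (filterlim_comp_2 (H := locally (- b)) f (fun t => - g t) Rplus Hf).
- exact (filterlim_comp _ _ _ g Ropp F (locally b) (locally (- b)) Hg (filterlim_opp b)).
- exact (filterlim_plus a (- b)).
Qed.

Lemma filterlim_eventually_pos {T : Type} {F : (T -> Prop) -> Prop} {FF : Filter F}
    (f : T -> R) (l : R) :
  filterlim f F (locally l) -> 0 < l -> F (fun t => 0 < f t).
Proof.
intros Hf Hl.
apply (filter_imp (fun t => Rabs (f t - l) < l)).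
- intros t Ht. apply Rabs_def2 in Ht. lra.
- exact (proj1 (filterlim_locally f l) Hf (mkposreal l Hl)).
Qed.

Lemma continuous_pos_near (f : R -> R) (y : R) :
  continuous f y -> 0 < f y ->
  exists d, 0 < d /\ forall z, Rabs (z - y) < d -> 0 < f z.
Proof.
intros Hf Hy.
destruct (filterlim_eventually_pos f (f y) Hf Hy) as [d Hd].
exists d. split; [apply cond_pos | exact Hd].
Qed.

Lemma at_right_0_pos (f : R -> R) (l : R) :
  filterlim f (at_right 0) (locally l) -> 0 < l ->
  exists d, 0 < d /\ forall t, 0 < t < d -> 0 < f t.
Proof.
intros Hf Hl.
destruct (filterlim_eventually_pos f l Hf Hl) as [d Hd].
exists d. split; [apply cond_pos |].
intros t [Ht Htd]. apply Hd; [| exact Ht].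
change (Rabs (t - 0) < d). rewrite Rminus_0_r, Rabs_pos_eq; lra.
Qed.

Lemma derive_pos_left_lt (f : R -> R) (y l : R) :
  is_derive f y l -> 0 < l ->
  exists d, 0 < d /\ forall k, 0 < k < d -> f (y - k) < f y.
Proof.
intros Hf Hl.
destruct (proj1 (is_derive_Reals f y l) Hf l Hl) as [d Hd].
exists d. split; [apply cond_pos |].
intros k Hk.
assert (Hq : Rabs ((f (y + - k) - f y) / - k - l) < l)
  by (apply Hd; [lra | rewrite Rabs_Ropp, Rabs_pos_eq; lra]).
apply Rabs_def2 in Hq.
assert (Hslope : 0 < (f (y + - k) - f y) / - k) by lra.
assert (Hdiff : f (y + - k) - f y = - k * ((f (y + - k) - f y) / - k)) by (field; lra).
replace (y - k) with (y + - k) by ring.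
nra.
Qed.

Lemma first_zero (w : R -> R) (d x : R) :
  (forall y, 0 < y -> continuous w y) ->
  0 < d -> (forall t, 0 < t < d -> 0 < w t) ->
  0 < x -> w x <= 0 ->
  exists m, 0 < m <= x /\ w m = 0 /\ forall s, 0 < s < m -> 0 < w s.
Proof.
intros Hcont Hd Hnear Hx Hwx.
set (B := fun t => 0 <= t <= x /\ forall s, 0 < s <= t -> 0 < w s).
assert (Hdx : d <= x).
{ destruct (Rlt_or_le x d) as [Hlt | Hle]; [| exact Hle].
  specialize (Hnear x (conj Hx Hlt)). lra. }
assert (HB : B (d / 2)) by (split; [lra | intros s Hs; apply Hnear; lra]).
destruct (completeness B (ex_intro _ x (fun t Ht => proj2 (proj1 Ht))) (ex_intro _ _ HB))
  as [m [Hub Hlub]].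
assert (Hm0 : d / 2 <= m) by exact (Hub _ HB).
assert (Hmx : m <= x) by (apply Hlub; intros t Ht; apply Ht).
assert (Hbelow : forall s, 0 < s < m -> 0 < w s).
{ intros s Hs. destruct (Rlt_or_le 0 (w s)) as [Hpos | Hneg]; [exact Hpos |].
  enough (m <= s) by lra.
  apply Hlub. intros t [_ Ht].
  destruct (Rle_or_lt t s) as [Hts | Hst]; [exact Hts |].
  specialize (Ht s (conj (proj1 Hs) (Rlt_le _ _ Hst))). lra. }
exists m. split; [lra |]. split; [| exact Hbelow].
destruct (Rtotal_order (w m) 0) as [Hneg | [Hzero | Hpos]]; [exfalso | exact Hzero | exfalso].
- destruct (continuous_pos_near (fun z => - w z) m
              (continuous_opp w m (Hcont m ltac:(lra))) ltac:(lra)) as [e [He Hw]].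
  set (s := m - Rmin m e / 2).
  assert (0 < Rmin m e <= e) by (split; [apply Rmin_glb_lt | apply Rmin_r]; lra).
  assert (Rmin m e <= m) by apply Rmin_l.
  assert (0 < w s) by (apply Hbelow; unfold s; lra).
  assert (0 < - w s) by (apply Hw; unfold s; rewrite Rabs_left; lra).
  lra.
- assert (Hmx' : m < x) by (destruct (Req_dec m x) as [<- | ]; lra).
  destruct (continuous_pos_near w m (Hcont m ltac:(lra)) Hpos) as [e [He Hw]].
  set (t := Rmin (m + e / 2) x).
  assert (m < t <= m + e / 2) by (split; [apply Rmin_glb_lt | apply Rmin_l]; lra).
  assert (t <= x) by apply Rmin_r.
  enough (B t) by (specialize (Hub t ltac:(assumption)); lra).
  split; [lra |]. intros s Hs.
  destruct (Rlt_or_le s m); [apply Hbelow; lra |].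
  apply Hw. rewrite Rabs_pos_eq; lra.
Qed.

Section DerivePosAtZeros.

Variables w w' : R -> R.
Hypothesis w_derive : forall y, 0 < y -> is_derive w y (w' y).
Hypothesis w_at_0 : w 0 = 0.
Hypothesis w_right_derive_0 : filterlim (fun t => w t / t) (at_right 0) (locally (w' 0)).
Hypothesis w'_pos_at_zeros : forall y, 0 <= y -> w y = 0 -> 0 < w' y.

Lemma pos_near_0 : exists d, 0 < d /\ forall t, 0 < t < d -> 0 < w t.
Proof.
destruct (at_right_0_pos _ _ w_right_derive_0 (w'_pos_at_zeros 0 (Rle_refl 0) w_at_0))
  as [d [Hd Hq]].
exists d. split; [exact Hd |]. intros t Ht.
specialize (Hq t Ht).
replace (w t) with (w t / t * t) by (field; lra).
apply Rmult_lt_0_compat; lra.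
Qed.

Lemma neg_left_of_zero (m : R) :
  0 < m -> w m = 0 -> exists s, 0 < s < m /\ w s < 0.
Proof.
intros Hm Hwm.
destruct (derive_pos_left_lt w m (w' m) (w_derive m Hm)
            (w'_pos_at_zeros m (Rlt_le _ _ Hm) Hwm)) as [d [Hd Hlt]].
set (k := Rmin m d / 2).
assert (0 < Rmin m d) by (apply Rmin_glb_lt; lra).
assert (Rmin m d <= m) by apply Rmin_l.
assert (Rmin m d <= d) by apply Rmin_r.
exists (m - k). split; [unfold k; lra |].
rewrite <- Hwm. apply Hlt. unfold k; lra.
Qed.

Lemma pos_of_derive_pos_at_zeros (x : R) : 0 < x -> 0 < w x.
Proof.
intros Hx.
destruct (Rlt_or_le 0 (w x)) as [Hpos | Hle]; [exact Hpos | exfalso].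
destruct pos_near_0 as [d [Hd Hnear]].
assert (Hcont : forall y, 0 < y -> continuous w y)
  by (intros y Hy; exact (ex_derive_continuous w y (ex_intro _ (w' y) (w_derive y Hy)))).
destruct (first_zero w d x Hcont Hd Hnear Hx Hle) as [m [Hm [Hwm Hbelow]]].
destruct (neg_left_of_zero m (proj1 Hm) Hwm) as [s [Hs Hws]].
specialize (Hbelow s Hs). lra.
Qed.

End DerivePosAtZeros.

Lemma ode_rhs_sub_beta (eta alpha h a beta1 beta2 y u : R) :
  ode_rhs eta alpha h a beta2 y u - ode_rhs eta alpha h a beta1 y u = beta2 - beta1.
Proof. unfold ode_rhs. ring. Qed.

Theorem lemma16 (sigma eta alpha h r a beta1 beta2 : R) (v1 v2 : R -> R) :
  0 < sigma -> 0 < eta -> 0 < alpha -> 0 < h -> 0 <= r ->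
  0 <= beta1 -> beta1 < beta2 ->
  is_solution sigma eta alpha h r a beta1 v1 ->
  is_solution sigma eta alpha h r a beta2 v2 ->
  forall x, 0 < x -> v1 x < v2 x.
Proof.
intros Hsigma _ _ _ _ _ Hbeta [d1 [[D1 [R1 _]] [E1 I1]]] [d2 [[D2 [R2 _]] [E2 I2]]] x Hx.
enough (0 < v2 x - v1 x) by lra.
apply (pos_of_derive_pos_at_zeros (fun t => v2 t - v1 t) (fun t => d2 t - d1 t)).
- intros y Hy. exact (is_derive_minus v2 v1 y _ _ (D2 y Hy) (D1 y Hy)).
- rewrite I1, I2. ring.
- refine (filterlim_ext _ _ _ (filterlim_Rminus _ _ _ _ R2 R1)).
  intros t. simpl. rewrite I1, I2. unfold Rdiv. ring.
- intros y Hy Hv.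
  assert (Hs : 0 < sigma ^ 2 / 2) by (apply Rdiv_lt_0_compat; [apply pow_lt |]; lra).
  apply Rmult_lt_reg_l with (sigma ^ 2 / 2); [exact Hs |].
  rewrite Rmult_0_r, Rmult_minus_distr_l, E1, E2 by exact Hy.
  replace (v2 y) with (v1 y) by lra.
  rewrite ode_rhs_sub_beta. lra.
- exact Hx.
Qed.
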